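(* If $q>2$, the collinearity graph $\Gamma$ of $\mathcal X$ has diameter $2$.
   Context: Let $q=2^n$ and let $Q_0\cong Q(4,q)$ be the parabolic quadric generalized quadrangle in $\mathrm{PG}(4,q)$. An elliptic ovoid of $Q_0$ is a set $X=S\cap Q_0$ where $S$ is a $3$-dimensional projective subspace meeting $Q_0$ in an elliptic quadric $Q^-(3,q)$. Two distinct elliptic ovoids meet in one point (then they are called tangent) or in a conic. $\Gamma$ is the graph whose vertices are the elliptic ovoids of $Q_0$, two being adjacent iff they are distinct and tangent. *)

From HB Require Import structures.
From mathcomp Require Import all_boot all_order all_algebra all_fingroup all_field.
Set Implicit Arguments. Unset Strict Implicit. Unset Printing Implicit Defensive.
Import GRing.Theory.
Local Open Scope ring_scope.

(* Vectors of F^5 are row vectors 'rV[F]_5; PG(4,q) = nonzero vectors up to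
   nonzero scalars.  Coordinates x_0..x_4. *)
Definition cd {F : fieldType} {k : nat} (x : 'rV[F]_k.+1) (i : nat) : F :=
  x ord0 (inord i).

Definition proj_point (F : finFieldType) (v : 'rV[F]_5) : {set 'rV[F]_5} :=
  [set c *: v | c in [set c : F | c != 0]].

(* Standard quadratic form of the parabolic quadric Q(4,q), q even:
   Q(x) = x0^2 + x1 x2 + x3 x4. *)
Definition Qpar (F : finFieldType) (x : 'rV[F]_5) : F :=
  cd x 0 ^+ 2 + cd x 1 * cd x 2 + cd x 3 * cd x 4.

Definition in_hyp (F : finFieldType) (a x : 'rV[F]_5) : bool :=
  (x *m a^T) == 0.

(* The hyperplane S = ker a meets Q0 in an elliptic quadric Q^-(3,q):
   there are coordinates on S (an injective linear map y |-> y *m M from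
   F^4 onto S) in which Q restricted to S is the canonical elliptic form
   y0 y1 + y2^2 + c y2 y3 + d y3^2 with y2^2 + c y2 y3 + d y3^2 irreducible
   (anisotropic) over F. *)
Definition elliptic_section (F : finFieldType) (a : 'rV[F]_5) : Prop :=
  a != 0 /\
  exists (M : 'M[F]_(4, 5)) (c d : F),
    row_free M /\ M *m a^T = 0 /\
    (forall y2 y3 : F, y2 ^+ 2 + c * y2 * y3 + d * y3 ^+ 2 = 0 ->
        y2 = 0 /\ y3 = 0) /\
    (forall y : 'rV[F]_4,
        Qpar (y *m M) = cd y 0 * cd y 1 + cd y 2 ^+ 2 + c * cd y 2 * cd y 3
                        + d * cd y 3 ^+ 2).

Definition section (F : finFieldType) (a : 'rV[F]_5) : {set 'rV[F]_5} :=
  [set x | [&& x != 0, in_hyp a x & Qpar x == 0]].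

Definition elliptic_ovoid (F : finFieldType) (X : {set 'rV[F]_5}) : Prop :=
  exists a, elliptic_section a /\ X = section a.

Definition tangent (F : finFieldType) (X Y : {set 'rV[F]_5}) : Prop :=
  X <> Y /\ exists v, v != 0 /\ X :&: Y = proj_point v.

Fixpoint is_walk (T : Type) (V : T -> Prop) (E : T -> T -> Prop)
    (x : T) (p : list T) (y : T) : Prop :=
  match p with
  | nil => x = y
  | cons z p' => E x z /\ V z /\ is_walk V E z p' y
  end.

Definition dist_le (T : Type) (V : T -> Prop) (E : T -> T -> Prop)
    (x y : T) (k : nat) : Prop :=
  exists p : list T, (size p <= k)%N /\ is_walk V E x p y.

Definition has_diameter (T : Type) (V : T -> Prop) (E : T -> T -> Prop)
    (d : nat) : Prop :=
  (forall x y, V x -> V y -> dist_le V E x y d) /\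
  (exists x y, V x /\ V y /\ ~ dist_le V E x y d.-1).

From HB Require Import structures.
From mathcomp Require Import all_boot all_order all_algebra all_fingroup all_field.
From mathcomp Require Import ring.
Set Implicit Arguments. Unset Strict Implicit. Unset Printing Implicit Defensive.
Import GRing.Theory.
Local Open Scope ring_scope.

(** In characteristic 2 the quadric Q(x) = x0^2 + x1 x2 + x3 x4 has a nucleus
  e0 = (1,0,0,0,0) lying on no elliptic hyperplane, so every elliptic
  hyperplane a.x = 0 can be normalised to a0 = 1; write [pole a] for the vector
  with polar (pole a) x = a.x + a0 x0.  Let T = {r^2 + r}, an additive subgroup
  of index 2.  An elliptic hyperplane has Q(pole a) outside T (otherwise it
  would contain a line of the quadric), and a hyperplane b is elliptic as soon
  as kappa a b lies in T, because then an explicit isometry of Q maps ker a onto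
  ker b.  For elliptic a1, a2, kappa a1 a2 is Q(pole a1) + Q(pole a2) modulo T,
  hence lies in T; writing it s^2 + s with s <> 0 and picking P on X1 with
  polar (pole (a1 + a2)) P = s, the hyperplane a1 + pole P is elliptic and
  tangent to X1 at P and to X2 at a second point.  When q > 2, two explicit
  elliptic ovoids share two non-proportional points, so the diameter is not 1. *)

Section Coordinates.
Variable F : fieldType.

Definition row4 (a b c d : F) : 'rV[F]_4 := \row_(i < 4) nth 0 [:: a; b; c; d] i.
Definition row5 (a b c d e : F) : 'rV[F]_5 := \row_(i < 5) nth 0 [:: a; b; c; d; e] i.

Lemma cd0_row5 a b c d e : cd (row5 a b c d e) 0 = a. Proof. by rewrite /cd mxE inordK. Qed.
Lemma cd1_row5 a b c d e : cd (row5 a b c d e) 1 = b. Proof. by rewrite /cd mxE inordK. Qed.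
Lemma cd2_row5 a b c d e : cd (row5 a b c d e) 2 = c. Proof. by rewrite /cd mxE inordK. Qed.
Lemma cd3_row5 a b c d e : cd (row5 a b c d e) 3 = d. Proof. by rewrite /cd mxE inordK. Qed.
Lemma cd4_row5 a b c d e : cd (row5 a b c d e) 4 = e. Proof. by rewrite /cd mxE inordK. Qed.
Lemma cd0_row4 a b c d : cd (row4 a b c d) 0 = a. Proof. by rewrite /cd mxE inordK. Qed.
Lemma cd1_row4 a b c d : cd (row4 a b c d) 1 = b. Proof. by rewrite /cd mxE inordK. Qed.
Lemma cd2_row4 a b c d : cd (row4 a b c d) 2 = c. Proof. by rewrite /cd mxE inordK. Qed.
Lemma cd3_row4 a b c d : cd (row4 a b c d) 3 = d. Proof. by rewrite /cd mxE inordK. Qed.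

Definition cd_rowE := (cd0_row5, cd1_row5, cd2_row5, cd3_row5, cd4_row5,
                       cd0_row4, cd1_row4, cd2_row4, cd3_row4).

Lemma row4_cd (y : 'rV[F]_4) : y = row4 (cd y 0) (cd y 1) (cd y 2) (cd y 3).
Proof.
apply/rowP => i; rewrite mxE /cd (ord1 ord0).
by case: i => -[|[|[|[|k]]]] Hi //=; congr (y _ _); apply/val_inj; rewrite /= inordK.
Qed.

Lemma row5_cd (x : 'rV[F]_5) : x = row5 (cd x 0) (cd x 1) (cd x 2) (cd x 3) (cd x 4).
Proof.
apply/rowP => i; rewrite mxE /cd.
by case: i => -[|[|[|[|[|k]]]]] Hi //=; congr (x _ _); apply/val_inj; rewrite /= inordK.
Qed.

Lemma row4_ext (y z : 'rV[F]_4) :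
  cd y 0 = cd z 0 -> cd y 1 = cd z 1 -> cd y 2 = cd z 2 -> cd y 3 = cd z 3 -> y = z.
Proof. by move=> h0 h1 h2 h3; rewrite (row4_cd y) (row4_cd z) h0 h1 h2 h3. Qed.

Lemma row5_ext (x z : 'rV[F]_5) : cd x 0 = cd z 0 -> cd x 1 = cd z 1 ->
  cd x 2 = cd z 2 -> cd x 3 = cd z 3 -> cd x 4 = cd z 4 -> x = z.
Proof. by move=> h0 h1 h2 h3 h4; rewrite (row5_cd x) (row5_cd z) h0 h1 h2 h3 h4. Qed.

Lemma cdD k (x y : 'rV[F]_k.+1) i : cd (x + y) i = cd x i + cd y i.
Proof. by rewrite /cd mxE. Qed.
Lemma cdZ k (x : 'rV[F]_k.+1) c i : cd (c *: x) i = c * cd x i.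
Proof. by rewrite /cd mxE. Qed.
Lemma cdN k (x : 'rV[F]_k.+1) i : cd (- x) i = - cd x i.
Proof. by rewrite /cd mxE. Qed.
Lemma cd0 k i : cd (0 : 'rV[F]_k.+1) i = 0.
Proof. by rewrite /cd mxE. Qed.

Lemma row5_neq0 (x : 'rV[F]_5) i : cd x i != 0 -> x != 0.
Proof. by apply: contra => /eqP ->; rewrite cd0. Qed.

Definition dot (a x : 'rV[F]_5) : F :=
  cd a 0 * cd x 0 + cd a 1 * cd x 1 + cd a 2 * cd x 2 + cd a 3 * cd x 3 + cd a 4 * cd x 4.

Lemma mulmx_trE (a x : 'rV[F]_5) : x *m a^T = (dot a x)%:M.
Proof.
apply/rowP => i; rewrite (ord1 i) !mxE eqxx mulr1n.
rewrite !big_ord_recl big_ord0 addr0 /dot /cd !mxE !addrA.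
by repeat congr (_ + _); rewrite mulrC; congr (_ * _);
  congr (_ _ _); apply/val_inj; rewrite /= inordK.
Qed.

Lemma dotDr a x y : dot a (x + y) = dot a x + dot a y.
Proof. by rewrite /dot !cdD; ring. Qed.
Lemma dotDl a b x : dot (a + b) x = dot a x + dot b x.
Proof. by rewrite /dot !cdD; ring. Qed.
Lemma dotZr a c x : dot a (c *: x) = c * dot a x.
Proof. by rewrite /dot !cdZ; ring. Qed.
Lemma dotZl a c x : dot (c *: a) x = c * dot a x.
Proof. by rewrite /dot !cdZ; ring. Qed.

End Coordinates.

Section Char2Quadric.
Variable F : finFieldType.
Hypothesis char2 : 2 \in [pchar F].
Let two0 : (2 : F) = 0 := pcharf0 char2.
Implicit Types (x y z a b v : 'rV[F]_5) (c : F).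

Definition polar x y : F :=
  cd x 1 * cd y 2 + cd x 2 * cd y 1 + cd x 3 * cd y 4 + cd x 4 * cd y 3.
Definition pole a : 'rV[F]_5 := row5 0 (cd a 2) (cd a 1) (cd a 4) (cd a 3).
Definition nucleus : 'rV[F]_5 := row5 1 0 0 0 0.

Lemma addvv_char2 x : x + x = 0.
Proof. by apply: row5_ext; rewrite !cdD cd0 (addrr_pchar2 char2). Qed.

Lemma in_hypE a x : in_hyp a x = (dot a x == 0).
Proof.
rewrite /in_hyp mulmx_trE; apply/eqP/eqP => [/matrixP/(_ ord0 ord0)|->].
  by rewrite !mxE mulr1n.
by rewrite raddf0.
Qed.

Lemma QparD x y : Qpar (x + y) = Qpar x + Qpar y + polar x y.
Proof. by rewrite /Qpar /polar !cdD; ring: two0. Qed.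
Lemma QparZ c x : Qpar (c *: x) = c ^+ 2 * Qpar x.
Proof. by rewrite /Qpar !cdZ; ring. Qed.
Lemma Qpar_nucleus : Qpar nucleus = 1.
Proof. by rewrite /Qpar /nucleus !cd_rowE; ring. Qed.
Lemma Qpar_pole_pole v : Qpar (pole (pole v)) = Qpar v + cd v 0 ^+ 2.
Proof. by rewrite /Qpar /pole !cd_rowE; ring: two0. Qed.

Lemma polarC x y : polar x y = polar y x.
Proof. by rewrite /polar; ring. Qed.
Lemma polarDr x y z : polar x (y + z) = polar x y + polar x z.
Proof. by rewrite /polar !cdD; ring. Qed.
Lemma polarDl x y z : polar (y + z) x = polar y x + polar z x.
Proof. by rewrite /polar !cdD; ring. Qed.
Lemma polarZr c x y : polar x (c *: y) = c * polar x y.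
Proof. by rewrite /polar !cdZ; ring. Qed.
Lemma polarZl c x y : polar (c *: y) x = c * polar y x.
Proof. by rewrite /polar !cdZ; ring. Qed.
Lemma polarxx x : polar x x = 0.
Proof. by rewrite /polar; ring: two0. Qed.
Lemma polar_nucleusl x : polar nucleus x = 0.
Proof. by rewrite /polar /nucleus !cd_rowE; ring. Qed.
Lemma polar_nucleusr x : polar x nucleus = 0.
Proof. by rewrite polarC polar_nucleusl. Qed.
Lemma polar_pole_pole v x : polar (pole (pole v)) x = polar v x.
Proof. by rewrite /polar /pole !cd_rowE. Qed.

Lemma cd0_pole a : cd (pole a) 0 = 0.
Proof. by rewrite /pole !cd_rowE. Qed.
Lemma poleD a b : pole (a + b) = pole a + pole b.
Proof. by apply: row5_ext; rewrite /pole !cdD !cd_rowE ?addr0. Qed.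
Lemma pole_eq0 a : cd a 0 = 0 -> pole a = 0 -> a = 0.
Proof.
move=> a0 ha; have c i : cd (pole a) i = 0 by rewrite ha cd0.
apply: row5_ext; rewrite cd0 ?a0 //.
- by have := c 2%N; rewrite /pole !cd_rowE.
- by have := c 1%N; rewrite /pole !cd_rowE.
- by have := c 4%N; rewrite /pole !cd_rowE.
- by have := c 3%N; rewrite /pole !cd_rowE.
Qed.

Lemma dot_pole v x : dot (pole v) x = polar v x.
Proof. by rewrite /dot /pole /polar !cd_rowE; ring. Qed.
Lemma dot_nucleus a : dot a nucleus = cd a 0.
Proof. by rewrite /dot /nucleus !cd_rowE; ring. Qed.
Lemma dot_decomp a x : dot a x = cd a 0 * cd x 0 + polar (pole a) x.
Proof. by rewrite /dot /pole /polar !cd_rowE; ring. Qed.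

End Char2Quadric.

Section EllipticForm.
Variable F : finFieldType.
Hypothesis char2 : 2 \in [pchar F].
Let two0 : (2 : F) = 0 := pcharf0 char2.
Implicit Types (y z w u : 'rV[F]_4) (c d : F).

Definition anisotropic c d := forall y2 y3 : F,
  y2 ^+ 2 + c * y2 * y3 + d * y3 ^+ 2 = 0 -> y2 = 0 /\ y3 = 0.

Definition ell_form c d y : F :=
  cd y 0 * cd y 1 + cd y 2 ^+ 2 + c * cd y 2 * cd y 3 + d * cd y 3 ^+ 2.
Definition ell_polar c y w : F :=
  cd y 0 * cd w 1 + cd y 1 * cd w 0 + c * (cd y 2 * cd w 3 + cd y 3 * cd w 2).

Lemma exists_sqrt (t : F) : exists r, r ^+ 2 = t.
Proof.
have /codomP [r ->] := injF_onto (fmorph_inj (pFrobenius_aut char2)) t.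
by exists r.
Qed.

Lemma anisotropic_neq0 c d : anisotropic c d -> c != 0.
Proof.
move=> an; apply/eqP => c0; have [r hr] := exists_sqrt d.
have h : r ^+ 2 + c * r * 1 + d * 1 ^+ 2 = 0 by rewrite c0 -hr; ring: two0.
by have [_ /eqP] := an r 1 h; rewrite oner_eq0.
Qed.

Lemma ell_formD c d y w :
  ell_form c d (y + w) = ell_form c d y + ell_form c d w + ell_polar c y w.
Proof. by rewrite /ell_form /ell_polar !cdD; ring: two0. Qed.

Lemma ell_form_cd0 c d u : anisotropic c d -> cd u 0 = 0 -> ell_form c d u = 0 ->
  cd u 2 = 0 /\ cd u 3 = 0.
Proof. by move=> an u0; rewrite /ell_form u0 mul0r add0r; apply: an. Qed.

Lemma ell_polar_nondegenerate c d y : anisotropic c d ->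
  (forall w, ell_polar c y w = 0) -> y = 0.
Proof.
move=> an Hp; have cn := anisotropic_neq0 an.
have y1 : cd y 1 = 0 by rewrite -(Hp (row4 1 0 0 0)) /ell_polar !cd_rowE; ring.
have y0 : cd y 0 = 0 by rewrite -(Hp (row4 0 1 0 0)) /ell_polar !cd_rowE; ring.
have /eqP : c * cd y 3 = 0 by rewrite -(Hp (row4 0 0 1 0)) /ell_polar !cd_rowE; ring.
rewrite mulf_eq0 (negbTE cn) => /eqP y3.
have /eqP : c * cd y 2 = 0 by rewrite -(Hp (row4 0 0 0 1)) /ell_polar !cd_rowE; ring.
rewrite mulf_eq0 (negbTE cn) => /eqP y2.
by apply: row4_ext; rewrite ?cd0.
Qed.

Lemma ell_polar_singular c d y w : ell_form c d y = 0 -> ell_form c d w = 0 ->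
  ell_form c d (y + w) = 0 -> ell_polar c y w = 0.
Proof. by rewrite ell_formD => -> -> /eqP; rewrite !add0r => /eqP. Qed.

Lemma ell_form_no_line c d y z : anisotropic c d -> ell_form c d z = 0 -> z != 0 ->
  (forall k, ell_form c d (y + k *: z) = 0) -> exists k, y = k *: z.
Proof.
move=> an gz zn gl.
have gy : ell_form c d y = 0 by have := gl 0; rewrite scale0r addr0.
have [z0|z0] := eqVneq (cd z 0) 0.
  have [z2 z3] := ell_form_cd0 an z0 gz.
  have z1 : cd z 1 != 0.
    by apply: contra zn => /eqP z1; apply/eqP; apply: row4_ext; rewrite ?cd0.
  have gyz : ell_form c d (y + z) = 0 by rewrite -[z]scale1r gl.
  have /eqP : cd y 0 * cd z 1 = 0.
    by rewrite -(ell_polar_singular gy gz gyz) /ell_polar z0 z2 z3; ring.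
  rewrite mulf_eq0 (negbTE z1) orbF => /eqP y0.
  have [y2 y3] := ell_form_cd0 an y0 gy.
  exists (cd y 1 / cd z 1); apply: row4_ext; rewrite !cdZ ?y0 ?y2 ?y3 ?z0 ?z2 ?z3 ?mulr0 //.
  by rewrite divfK.
pose k := - (cd y 0 / cd z 0); pose u := y + k *: z.
have u0 : cd u 0 = 0 by rewrite cdD cdZ /k mulNr divfK // subrr.
have [u2 u3] := ell_form_cd0 an u0 (gl k).
have uz : ell_form c d (u + z) = 0.
  by rewrite /u -addrA -{2}(scale1r z) -scalerDl gl.
have /eqP : cd u 1 * cd z 0 = 0.
  by rewrite -(ell_polar_singular (gl k) gz uz) /ell_polar u0 u2 u3; ring.
rewrite mulf_eq0 (negbTE z0) orbF => /eqP u1.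
have u_eq0 : u = 0 by apply: row4_ext; rewrite ?cd0.
by exists (- k); rewrite scaleNr; apply/eqP; rewrite -subr_eq0 opprK -/u u_eq0.
Qed.

End EllipticForm.

Section EllipticSection.
Variable F : finFieldType.
Hypothesis char2 : 2 \in [pchar F].
Implicit Types (x w a b : 'rV[F]_5) (y z : 'rV[F]_4) (M : 'M[F]_(4, 5)) (c d : F).

Definition ell_frame a M c d := [/\ a != 0, row_free M, M *m a^T = 0, anisotropic c d &
  forall y, Qpar (y *m M) = ell_form c d y].

Lemma elliptic_sectionP a : elliptic_section a <-> exists M c d, ell_frame a M c d.
Proof.
split=> [[an [M [c [d [rf [hM [ani hf]]]]]]]|[M [c [d [an rf hM ani hf]]]]].
  by exists M, c, d.
by split=> //; exists M, c, d.
Qed.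

Lemma in_hyp_mulmx a M y : M *m a^T = 0 -> in_hyp a (y *m M).
Proof. by move=> hM; rewrite /in_hyp -mulmxA hM mulmx0. Qed.

Lemma frame_in_hyp a M :
  (forall y, in_hyp a (y *m M)) -> M *m a^T = 0.
Proof. by move=> h; apply/row_matrixP => i; rewrite row_mul row0 rowE; apply/eqP/h. Qed.

Lemma in_hyp_image a M x : a != 0 -> row_free M -> M *m a^T = 0 -> in_hyp a x ->
  exists y, x = y *m M.
Proof.
move=> an rf hM /eqP hx.
have sM : (M <= kermx a^T)%MS by apply/sub_kermxP.
have rk : \rank (kermx a^T) = 4%N by rewrite mxrank_ker mxrank_tr rank_rV an.
have /andP [_ sK] : (M == kermx a^T)%MS.
  by rewrite -(mxrank_leqif_eq sM).2 rk; move: rf; rewrite /row_free => /eqP ->.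
by apply/submxP; apply: submx_trans sK; apply/sub_kermxP.
Qed.

Section Frame.
Variables (M : 'M[F]_(4, 5)) (c d : F).
Hypothesis hf : forall y, Qpar (y *m M) = ell_form c d y.

Lemma ell_polar_frame y z : ell_polar c y z = polar (y *m M) (z *m M).
Proof.
apply: (@addrI _ (ell_form c d y + ell_form c d z)).
by rewrite -(ell_formD char2) -!hf mulmxDl (QparD char2).
Qed.

Lemma ell_frame_radical y : anisotropic c d ->
  (forall z, polar (y *m M) (z *m M) = 0) -> y = 0.
Proof.
by move=> an hy; apply: (ell_polar_nondegenerate char2 an) => z; rewrite ell_polar_frame.
Qed.

Lemma ell_frame_row_free : anisotropic c d -> row_free M.
Proof.
move=> an; apply: inj_row_free => y hy; apply: ell_frame_radical => // z.
by rewrite hy /polar !cd0; ring.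
Qed.

End Frame.

Lemma ell_frame_nucleus a M c d : ell_frame a M c d -> cd a 0 != 0.
Proof.
case=> an rf hM ani hf; apply/eqP => a0.
have [y hy] : exists y, nucleus F = y *m M.
  by apply: (in_hyp_image an rf hM); rewrite in_hypE dot_nucleus a0.
have y0 : y = 0.
  by apply: (ell_frame_radical hf) => // z; rewrite -hy polar_nucleusl.
have /eqP := cd0_row5 (1 : F) 0 0 0 0.
by rewrite -/(nucleus F) hy y0 mul0mx cd0 eq_sym oner_eq0.
Qed.

Lemma section_perp_proportional a M c d x w : ell_frame a M c d ->
  in_hyp a x -> in_hyp a w -> Qpar x = 0 -> Qpar w = 0 -> polar x w = 0 -> w != 0 ->
  exists k, x = k *: w.
Proof.
case=> an rf hM ani hf hx hw Qx Qw xw wn.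
have [y hy] := in_hyp_image an rf hM hx; have [z hz] := in_hyp_image an rf hM hw.
have zn : z != 0 by apply: contra wn => /eqP z0; rewrite hz z0 mul0mx.
have [k yk] : exists k, y = k *: z.
  apply: (ell_form_no_line char2 ani) => [||k]; rewrite -?hf -?hz //.
  by rewrite mulmxDl -scalemxAl -hz -hy (QparD char2) QparZ polarZr Qx Qw xw; ring.
by exists k; rewrite hy yk hz scalemxAl.
Qed.

End EllipticSection.

Section ArtinSchreier.
Variable F : finFieldType.
Hypothesis char2 : 2 \in [pchar F].
Let two0 : (2 : F) = 0 := pcharf0 char2.
Implicit Types (r s t x y : F).

Definition as_map r : F := r ^+ 2 + r.
Definition AS_image : {set F} := [set as_map r | r : F].

Lemma mem_AS_image r : as_map r \in AS_image.
Proof. exact: imset_f. Qed.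

Lemma AS_image0 : 0 \in AS_image.
Proof. by have := mem_AS_image 0; rewrite /as_map expr0n addr0. Qed.

Lemma AS_imageP t : reflect (exists r, t = as_map r) (t \in AS_image).
Proof. by apply: (iffP imsetP) => [[r _ ->]|[r ->]]; exists r. Qed.

Lemma as_mapD r s : as_map (r + s) = as_map r + as_map s.
Proof. by rewrite /as_map; ring: two0. Qed.

Lemma as_map_eq r s : as_map r = as_map s -> s = r \/ s = r + 1.
Proof.
move=> h; have /eqP : (r + s) * (r + s + 1) = 0.
  have -> : (r + s) * (r + s + 1) = as_map (r + s) by rewrite /as_map; ring.
  by rewrite as_mapD h (addrr_pchar2 char2).
rewrite mulf_eq0 => /orP [] /eqP e; [left|right].
  by apply: (addrI r); rewrite e (addrr_pchar2 char2).
by apply: (addrI (r + 1)); rewrite addrAC e (addrr_pchar2 char2).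
Qed.

Lemma AS_imageD x y : x \in AS_image -> y \in AS_image -> x + y \in AS_image.
Proof. by move=> /AS_imageP [r ->] /AS_imageP [s ->]; rewrite -as_mapD mem_AS_image. Qed.

Lemma AS_image_root t : t \in AS_image -> exists nu, nu ^+ 2 * t + nu + 1 = 0.
Proof.
case/AS_imageP=> r ->; have [t0|t0] := eqVneq (as_map r) 0.
  by exists 1; rewrite t0 mulr0 add0r (addrr_pchar2 char2).
exists (r / as_map r); rewrite -(addrr_pchar2 char2 1); congr (_ + 1).
by move: t0; rewrite /as_map => t0; field.
Qed.

Lemma card_AS_image : (#|F| <= 2 * #|AS_image|)%N.
Proof.
rewrite -[X in (X <= _)%N]sum1_card (partition_big_imset as_map) /= mulnC -sum_nat_const.
apply: leq_sum => _ /imsetP [r _ ->]; rewrite sum1_card.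
apply: (@leq_trans #|[set r; r + 1]|); last by rewrite cards2; case: (_ != _).
apply/subset_leq_card/subsetP => s /eqP /esym /as_map_eq [] ->.
  by rewrite !inE eqxx.
by rewrite !inE eqxx orbT.
Qed.

Lemma notin_AS_imageD x y : x \notin AS_image -> y \notin AS_image -> x + y \in AS_image.
Proof.
move=> hx hy; set sh := fun t => t + x.
have sub : sh @: AS_image \subset ~: AS_image.
  apply/subsetP => _ /imsetP [t ht ->]; rewrite inE; apply: contra hx => htx.
  by rewrite -[x](addKr_pchar2 char2 t) AS_imageD // addrC.
have cC : (#|~: AS_image| <= #|sh @: AS_image|)%N.
  rewrite card_imset; last exact: addIr.
  by rewrite -(leq_add2l #|AS_image|) cardsC addnn -mul2n card_AS_image.
have /eqP e : sh @: AS_image == ~: AS_image by rewrite eqEcard sub cC.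
have : y \in ~: AS_image by rewrite inE.
rewrite -e => /imsetP [t ht ->].
by rewrite addrCA (addrr_pchar2 char2) addr0.
Qed.

Lemma exists_notin_AS_image : exists d, d \notin AS_image.
Proof.
have /subsetPn [d _ hd] : ~~ ([set: F] \subset AS_image); last by exists d.
apply/negP => /subset_leq_card; rewrite cardsT => le.
have /imset_injP inj : #|AS_image| == #|F| by rewrite eqn_leq le leq_imset_card.
have e01 : as_map 0 = as_map 1 by rewrite /as_map; ring: two0.
by move: (inj 0 1 isT isT e01) => /eqP; rewrite eq_sym oner_eq0.
Qed.

End ArtinSchreier.

Section Tangency.
Variable F : finFieldType.
Hypothesis char2 : 2 \in [pchar F].
Let two0 : (2 : F) = 0 := pcharf0 char2.
Implicit Types (x w a b v R : 'rV[F]_5) (M : 'M[F]_(4, 5)) (c d : F).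

Lemma elliptic_pole_notin_AS a M c d : ell_frame a M c d -> cd a 0 = 1 ->
  Qpar (pole a) \notin AS_image F.
Proof.
move=> fa a0; apply/negP => /(AS_image_root char2) [nu].
have -> : Qpar (pole a) = cd a 2 * cd a 1 + cd a 4 * cd a 3.
  by rewrite /Qpar /pole !cd_rowE; ring.
set a1 := cd a 1; set a2 := cd a 2; set a3 := cd a 3; set a4 := cd a 4 => hnu.
(* U and V span a line of singular points of ker a. *)
pose U := row5 a1 (1 + nu * a1 * a2) (nu * a1 * a1) (nu * a1 * a4) (nu * a1 * a3).
pose V := row5 a3 (nu * a3 * a2) (nu * a3 * a1) (1 + nu * a3 * a4) (nu * a3 * a3).
have hU : in_hyp a U.
  by rewrite in_hypE /dot /U !cd_rowE a0 -/a1 -/a2 -/a3 -/a4; apply/eqP; ring: two0.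
have hV : in_hyp a V.
  by rewrite in_hypE /dot /V !cd_rowE a0 -/a1 -/a2 -/a3 -/a4; apply/eqP; ring: two0.
have QU : Qpar U = 0.
  rewrite -(mulr0 (a1 ^+ 2)) -hnu /Qpar /U !cd_rowE; ring.
have QV : Qpar V = 0.
  rewrite -(mulr0 (a3 ^+ 2)) -hnu /Qpar /V !cd_rowE; ring.
have UV : polar U V = 0 by rewrite /polar /U /V !cd_rowE; ring: two0.
have Vn : V != 0.
  have [a30|a30] := eqVneq a3 0; last by apply: (@row5_neq0 _ _ 0); rewrite cd_rowE.
  by apply: (@row5_neq0 _ _ 3); rewrite cd_rowE a30 mulr0 mul0r addr0 oner_neq0.
have [k hk] := section_perp_proportional char2 fa hU hV QU QV UV Vn.
have h0 := congr1 (fun v => cd v 0) hk; have h1 := congr1 (fun v => cd v 1) hk.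
rewrite /= !cdZ /U /V !cd_rowE in h0 h1.
have /eqP : (1 : F) = 0 by rewrite -[1](addrK (nu * a1 * a2)) h1 h0; ring.
by rewrite oner_eq0.
Qed.

Lemma ell_frame_normalize a M c d : ell_frame a M c d ->
  let a' := (cd a 0)^-1 *: a in
  [/\ ell_frame a' M c d, cd a' 0 = 1 & section a' = section a].
Proof.
move=> fa; have a0 := ell_frame_nucleus char2 fa; case: fa => an rf hM ani hf a'.
have hx x : in_hyp a' x = in_hyp a x.
  by rewrite !in_hypE /a' dotZl mulf_eq0 invr_eq0 (negbTE a0).
split.
- split=> //; first by rewrite /a' scaler_eq0 invr_eq0 (negbTE a0) (negbTE an).
  by rewrite /a' linearZ /= -scalemxAr hM scaler0.
- by rewrite /a' cdZ mulVf.
- by apply/setP => x; rewrite !inE hx.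
Qed.

Lemma dot_pole_shift a b x : cd a 0 = 1 -> cd b 0 = 1 ->
  dot b x = dot a x + polar (pole (a + b)) x.
Proof. by move=> a0 b0; rewrite !dot_decomp a0 b0 poleD polarDl; ring: two0. Qed.

Definition kappa a b : F := Qpar (pole (a + b)) + dot b (pole (a + b)) ^+ 2.

(* With [nu ^+ 2 * kappa a b + nu + 1 = 0], the map [x |-> x + polar W x *: v]
   below preserves [Qpar] and carries [ker a] into [ker b]. *)
Lemma elliptic_transfer a b M c d : ell_frame a M c d -> cd a 0 = 1 -> cd b 0 = 1 ->
  kappa a b \in AS_image F -> exists M', ell_frame b M' c d.
Proof.
move=> [an rf hM ani hf] a0 b0 /(AS_image_root char2) [nu].
rewrite /kappa; set W := pole (a + b); set s := dot b W => hnu.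
set v := nu *: W + (1 + nu * s) *: nucleus F.
pose M' := M + (M *m (pole W)^T) *m v.
have yM y : y *m M' = y *m M + polar W (y *m M) *: v.
  by rewrite mulmxDr !mulmxA mulmx_trE mul_scalar_mx dot_pole.
have Qv : Qpar v = nu ^+ 2 * Qpar W + (1 + nu * s) ^+ 2.
  rewrite /v (QparD char2) !QparZ Qpar_nucleus polarZr polarZl polar_nucleusr.
  by rewrite !mulr0 addr0 mulr1.
have Bxv x : polar x v = nu * polar W x.
  by rewrite /v polarDr !polarZr polar_nucleusr mulr0 addr0 polarC.
have Qx x : Qpar (x + polar W x *: v) = Qpar x.
  rewrite (QparD char2) QparZ polarZr Qv Bxv.
  by rewrite -[RHS]addr0 -(mulr0 (polar W x ^+ 2)) -hnu; ring: two0.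
have hf' y : Qpar (y *m M') = ell_form c d y by rewrite yM Qx hf.
have inb x : in_hyp a x -> in_hyp b (x + polar W x *: v).
  rewrite !in_hypE => /eqP ha; apply/eqP.
  rewrite dotDr dotZr (dot_pole_shift x a0 b0) -/W ha add0r /v dotDr !dotZr -/s dot_nucleus b0.
  by ring: two0.
exists M'; split=> //.
- by apply: (@row5_neq0 _ _ 0); rewrite b0 oner_neq0.
- exact: (ell_frame_row_free char2 hf').
- by apply: frame_in_hyp => y; rewrite yM; apply/inb/in_hyp_mulmx.
Qed.

Lemma proj_pointP R x : reflect (exists2 k, k != 0 & x = k *: R) (x \in proj_point R).
Proof.
apply: (iffP imsetP) => [[k]|[k kn ->]]; first by rewrite inE => kn ->; exists k.
by exists k; rewrite ?inE.
Qed.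

Lemma section_neq_proj_point a M c d R : ell_frame a M c d -> section a <> proj_point R.
Proof.
case=> an rf hM ani hf e.
have mem y : y != 0 -> ell_form c d y = 0 -> y *m M \in proj_point R.
  by move=> yn gy; rewrite -e inE mulmx_free_eq0 // yn in_hyp_mulmx //= hf gy.
have [k0 k0n h0] : exists2 k, k != 0 & row4 1 0 0 0 *m M = k *: R.
  apply/proj_pointP/mem; last by rewrite /ell_form !cd_rowE; ring.
  by apply: contra (oner_neq0 F) => /eqP/(congr1 (fun t => cd t 0)); rewrite cd0 !cd_rowE => ->.
have [k1 k1n h1] : exists2 k, k != 0 & row4 0 1 0 0 *m M = k *: R.
  apply/proj_pointP/mem; last by rewrite /ell_form !cd_rowE; ring.
  by apply: contra (oner_neq0 F) => /eqP/(congr1 (fun t => cd t 1)); rewrite cd0 !cd_rowE => ->.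
have : (row4 0 1 0 0 - (k1 / k0) *: row4 1 0 0 0) *m M = 0.
  by rewrite mulmxBl -scalemxAl h0 h1 scalerA divfK // subrr.
move/eqP; rewrite mulmx_free_eq0 // => /eqP /(congr1 (fun t => cd t 1)).
by rewrite cdD cdN cdZ cd0 !cd_rowE mulr0 subr0 => /eqP; rewrite oner_eq0.
Qed.

Lemma tangent_sections a M c d b R : ell_frame a M c d ->
  R != 0 -> in_hyp a R -> in_hyp b R -> Qpar R = 0 ->
  (forall x, in_hyp a x -> in_hyp b x -> polar R x = 0) ->
  tangent (section a) (section b) /\ tangent (section b) (section a).
Proof.
move=> fa Rn haR hbR QR perp.
have I : section a :&: section b = proj_point R.
  apply/setP => x; rewrite !inE; apply/idP/proj_pointP.
    case/andP => /and3P [xn hax /eqP Qx] /and3P [_ hbx _].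
    have [k hk] := section_perp_proportional char2 fa hax haR Qx QR
      (etrans (polarC _ _) (perp x hax hbx)) Rn.
    by exists k => //; apply: contra xn => /eqP k0; rewrite hk k0 scale0r.
  case=> k kn ->; move: haR hbR; rewrite !in_hypE !dotZr => /eqP -> /eqP ->.
  by rewrite mulr0 eqxx QparZ QR mulr0 eqxx scaler_eq0 (negbTE kn) (negbTE Rn).
have ne : section a <> section b.
  by move=> e; apply: (section_neq_proj_point (R := R) fa); rewrite -I e setIid.
by split; split=> //; [exists R | move/esym | exists R; rewrite setIC].
Qed.

Lemma not_tangent_two_points (X Y : {set 'rV[F]_5}) p1 p2 :
  p1 \in X :&: Y -> p2 \in X :&: Y -> p1 != 0 -> (forall k, p2 != k *: p1) ->
  ~ tangent X Y.
Proof.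
move=> m1 m2 p1n np [_ [v [vn I]]]; rewrite I in m1 m2.
case/proj_pointP: m1 => k1 k1n h1; case/proj_pointP: m2 => k2 k2n h2.
by case/eqP: (np (k2 / k1)); rewrite h1 h2 scalerA divfK.
Qed.

End Tangency.

Section CommonNeighbour.
Variable F : finFieldType.
Hypothesis char2 : 2 \in [pchar F].
Let two0 : (2 : F) = 0 := pcharf0 char2.
Implicit Types (x a b W P R : 'rV[F]_5) (y : 'rV[F]_4) (M : 'M[F]_(4, 5)) (c d s : F).

Lemma exists_hyp_nonperp a W : cd a 0 = 1 -> W != 0 -> cd W 0 = 0 ->
  exists2 x, in_hyp a x & polar W x != 0.
Proof.
move=> a0 Wn W0; case: (pickP (fun x => polar W x != 0)) => [x hx|perp].
  exists (x + dot a x *: nucleus F).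
    by rewrite in_hypE dotDr dotZr dot_nucleus a0 mulr1 (addrr_pchar2 char2).
  by rewrite polarDr polarZr polar_nucleusr mulr0 addr0.
have z x : polar W x = 0 by apply/eqP/negbFE/perp.
case/negP: Wn; apply/eqP; apply: row5_ext; rewrite ?cd0 ?W0 //.
- by rewrite -(z (row5 0 0 1 0 0)) /polar !cd_rowE; ring.
- by rewrite -(z (row5 0 1 0 0 0)) /polar !cd_rowE; ring.
- by rewrite -(z (row5 0 0 0 0 1)) /polar !cd_rowE; ring.
- by rewrite -(z (row5 0 0 0 1 0)) /polar !cd_rowE; ring.
Qed.

Lemma exists_singular_nonperp a M c d W : ell_frame a M c d ->
  (exists2 x, in_hyp a x & polar W x != 0) ->
  exists2 y, ell_form c d y = 0 & polar W (y *m M) != 0.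
Proof.
case=> an rf hM ani hf [x hx hW]; have [y hy] := in_hyp_image an rf hM hx.
(* Singular vectors spanning F^4, so [polar W] cannot vanish on all their images. *)
pose p0 : 'rV[F]_4 := row4 1 0 0 0; pose p1 : 'rV[F]_4 := row4 0 1 0 0.
pose p2 : 'rV[F]_4 := row4 1 1 1 0; pose p3 := row4 1 d 0 1.
have g0 : ell_form c d p0 = 0 by rewrite /ell_form !cd_rowE; ring.
have g1 : ell_form c d p1 = 0 by rewrite /ell_form !cd_rowE; ring.
have g2 : ell_form c d p2 = 0 by rewrite /ell_form !cd_rowE; ring: two0.
have g3 : ell_form c d p3 = 0 by rewrite /ell_form !cd_rowE; ring: two0.
have [h0|] := eqVneq (polar W (p0 *m M)) 0; last by exists p0.
have [h1|] := eqVneq (polar W (p1 *m M)) 0; last by exists p1.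
have [h2|] := eqVneq (polar W (p2 *m M)) 0; last by exists p2.
have [h3|] := eqVneq (polar W (p3 *m M)) 0; last by exists p3.
case/negP: hW; apply/eqP; rewrite hy.
have -> : y = (cd y 0 - cd y 2 - cd y 3) *: p0 + (cd y 1 - cd y 2 - d * cd y 3) *: p1
   + cd y 2 *: p2 + cd y 3 *: p3.
  by apply: row4_ext; rewrite !cdD !cdZ !cd_rowE; ring.
by rewrite !mulmxDl -!scalemxAl !polarDr !polarZr h0 h1 h2 h3 !mulr0 !addr0.
Qed.

Lemma exists_section_point a M c d W s : ell_frame a M c d -> cd a 0 = 1 ->
  W != 0 -> cd W 0 = 0 -> s != 0 ->
  exists P, [/\ P != 0, in_hyp a P, Qpar P = 0 & polar W P = s].
Proof.
move=> fa a0 Wn W0 sn.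
have [y gy hB] := exists_singular_nonperp fa (exists_hyp_nonperp a0 Wn W0).
case: fa => _ _ hM _ hf; set P := (s / polar W (y *m M)) *: (y *m M).
have BP : polar W P = s by rewrite polarZr divfK.
exists P; split=> //.
- by apply: contra sn => /eqP P0; rewrite -BP P0 /polar !cd0; apply/eqP; ring.
- by move: (in_hyp_mulmx y hM); rewrite !in_hypE dotZr => /eqP ->; rewrite mulr0.
- by rewrite QparZ hf gy mulr0.
Qed.

Lemma kappa_in_AS a1 M1 c1 d1 a2 M2 c2 d2 :
  ell_frame a1 M1 c1 d1 -> ell_frame a2 M2 c2 d2 -> cd a1 0 = 1 -> cd a2 0 = 1 ->
  kappa a1 a2 \in AS_image F.
Proof.
move=> f1 f2 a10 a20.
have -> : kappa a1 a2 =
    Qpar (pole a1) + Qpar (pole a2) + as_map (polar (pole a1) (pole a2)).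
  rewrite /kappa (dot_decomp a2) cd0_pole mulr0 add0r poleD (QparD char2) polarDr.
  by rewrite (polarxx char2) (polarC (pole a2)) /as_map; ring.
apply: (AS_imageD char2); last exact: mem_AS_image.
apply: (notin_AS_imageD char2); first exact: (elliptic_pole_notin_AS char2 f1 a10).
exact: (elliptic_pole_notin_AS char2 f2 a20).
Qed.

Lemma pole_add_neq0 a b : cd a 0 = 1 -> cd b 0 = 1 -> a != b -> pole (a + b) != 0.
Proof.
move=> a0 b0; apply: contra => /eqP /(pole_eq0 _) ab0.
have /ab0 /eqP : cd (a + b) 0 = 0 by rewrite cdD a0 b0 (addrr_pchar2 char2).
by rewrite -(addvv_char2 char2 b) (inj_eq (addIr b)).
Qed.

Lemma tangent_pole_shift a M c d P : ell_frame a M c d -> cd a 0 = 1 ->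
  P != 0 -> in_hyp a P -> Qpar P = 0 ->
  elliptic_section (a + pole P) /\ tangent (section a) (section (a + pole P)).
Proof.
move=> fa a0 Pn haP QP; set b := a + pole P.
have b0 : cd b 0 = 1 by rewrite cdD cd0_pole a0 addr0.
have hb x : in_hyp a x -> in_hyp b x = (polar P x == 0).
  by rewrite !in_hypE /b dotDl dot_pole => /eqP ->; rewrite add0r.
have kab : kappa a b = 0.
  have ab : a + b = pole P by rewrite /b addrA (addvv_char2 char2) add0r.
  have dP : polar (pole a) P = cd P 0.
    move: haP; rewrite in_hypE dot_decomp a0 mul1r => /eqP h.
    by apply: (addrI (cd P 0)); rewrite h (addrr_pchar2 char2).
  rewrite /kappa ab (Qpar_pole_pole char2) /b dotDl dot_pole (polarC P) polar_pole_pole.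
  rewrite (polarxx char2) addr0.
  rewrite dot_decomp cd0_pole mulr0 add0r (polarC (pole a)) polar_pole_pole (polarC P) dP QP.
  by rewrite add0r (addrr_pchar2 char2).
have kab_AS : kappa a b \in AS_image F by rewrite kab AS_image0.
have [M' fb] := elliptic_transfer char2 fa a0 b0 kab_AS.
split; first by apply/elliptic_sectionP; exists M', c, d.
apply: (proj1 (tangent_sections char2 fa Pn haP _ QP _)); first by rewrite hb // (polarxx char2).
by move=> x hax; rewrite hb // polarC => /eqP.
Qed.

Lemma tangent_pole_shift_far a1 a2 M c d P s : ell_frame a2 M c d ->
  cd a1 0 = 1 -> cd a2 0 = 1 -> in_hyp a1 P -> Qpar P = 0 ->
  polar (pole (a1 + a2)) P = s -> s != 0 -> as_map s = kappa a1 a2 ->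
  tangent (section (a1 + pole P)) (section a2).
Proof.
move=> f2 a10 a20 h1P QP; set W := pole (a1 + a2) => BWP sn hs.
set a3 := a1 + pole P; set rho := dot a2 (W + P); set R := W + P + rho *: nucleus F.
have a30 : cd a3 0 = 1 by rewrite cdD cd0_pole a10 addr0.
have d2P : dot a2 P = s.
  by move: h1P; rewrite in_hypE (dot_pole_shift char2 P a10 a20) -/W BWP => /eqP ->; rewrite add0r.
have d3x x : dot a3 x = dot a2 x + polar (W + P) x.
  rewrite (dot_pole_shift char2 x a20 a30) /a3 (addrA a2 a1 (pole P)) (addrC a2 a1) poleD -/W.
  by rewrite !polarDl polar_pole_pole.
have BWR : polar W R = s.
  by rewrite /R !polarDr (polarxx char2) add0r BWP polarZr polar_nucleusr mulr0 addr0.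
have Rn : R != 0 by apply: contra sn => /eqP R0; rewrite -BWR R0 /polar !cd0; apply/eqP; ring.
have h2R : in_hyp a2 R.
  by rewrite in_hypE /R dotDr dotZr dot_nucleus a20 mulr1 -/rho (addrr_pchar2 char2).
have h3R : in_hyp a3 R.
  move: h2R; rewrite !in_hypE d3x => /eqP ->; rewrite add0r /R polarDr (polarxx char2) add0r.
  by rewrite polarZr polar_nucleusr mulr0.
have QR : Qpar R = 0.
  have QW : Qpar W = s ^+ 2 + s + polar (pole a2) W ^+ 2.
    by move: hs; rewrite /kappa -/W dot_decomp cd0_pole mulr0 add0r /as_map => ->; ring: two0.
  rewrite /R (QparD char2) QparZ Qpar_nucleus polarZr polar_nucleusr mulr0 addr0.
  by rewrite (QparD char2) QP BWP /rho dotDr d2P dot_decomp cd0_pole mulr0 add0r QW; ring: two0.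
apply: (proj2 (tangent_sections char2 f2 Rn h2R h3R QR _)) => x h2 h3.
move: h2 h3; rewrite !in_hypE d3x => /eqP ->; rewrite add0r => /eqP h.
by rewrite /R polarDl h add0r polarZl polar_nucleusl mulr0.
Qed.

Lemma common_tangent_section a1 M1 c1 d1 a2 M2 c2 d2 :
  ell_frame a1 M1 c1 d1 -> ell_frame a2 M2 c2 d2 -> cd a1 0 = 1 -> cd a2 0 = 1 -> a1 != a2 ->
  exists a3, [/\ elliptic_section a3, tangent (section a1) (section a3)
                & tangent (section a3) (section a2)].
Proof.
move=> f1 f2 a10 a20 a12.
have /AS_imageP [r hr] := kappa_in_AS f1 f2 a10 a20.
pose s := if r == 0 then 1 else r.
have sn : s != 0 by rewrite /s; case: ifPn => // _; exact: oner_neq0.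
have hs : as_map s = kappa a1 a2.
  rewrite hr /s; case: ifP => // /eqP ->.
  by rewrite /as_map expr1n expr0n addr0 (addrr_pchar2 char2).
have [P [Pn h1P QP BP]] :=
  exists_section_point f1 a10 (pole_add_neq0 a10 a20 a12) (cd0_pole _) sn.
have [e3 t13] := tangent_pole_shift f1 a10 Pn h1P QP.
by exists (a1 + pole P); split=> //; apply: (tangent_pole_shift_far f2 a10 a20 h1P QP BP sn hs).
Qed.

End CommonNeighbour.

Lemma dist_le1P (T : Type) (V : T -> Prop) (E : T -> T -> Prop) x y :
  dist_le V E x y 1 -> x = y \/ E x y.
Proof.
case=> -[|z [|? ?]] [] //= _; first by left.
by case=> Exz [_ <-]; right.
Qed.

Section ReferenceOvoids.
Variable F : finFieldType.
Hypothesis char2 : 2 \in [pchar F].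
Let two0 : (2 : F) = 0 := pcharf0 char2.
Implicit Types (d e t u : F).

Definition ref_frame d : 'M[F]_(4, 5) := \matrix_(i < 4)
  nth 0 [:: row5 0 1 0 0 0; row5 0 0 1 0 0; row5 1 0 0 1 0; row5 d 0 0 0 1] i.

Lemma ref_frameE d y :
  y *m ref_frame d = row5 (cd y 2 + d * cd y 3) (cd y 0) (cd y 1) (cd y 2) (cd y 3).
Proof.
rewrite {1}[y]row4_cd; apply/rowP => j; rewrite !mxE !big_ord_recl big_ord0 !mxE /=.
by case: j => -[|[|[|[|[|?]]]]] ? /=; rewrite ?nth_nil; ring.
Qed.

Lemma anisotropic_ref d : d \notin AS_image F -> anisotropic 1 (d ^+ 2).
Proof.
move=> nd y2 y3 h; have [y30|y30] := eqVneq y3 0.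
  by move: h; rewrite y30 !mulr0 expr0n /= mulr0 !addr0 => /eqP; rewrite expf_eq0 /= => /eqP.
case/negP: nd; set w := y2 / y3.
have dw : d ^+ 2 = as_map w.
  apply: (addIr (d ^+ 2)); rewrite (addrr_pchar2 char2) /as_map /w.
  by rewrite -[0](mul0r (y3 ^+ 2)^-1) -h; field.
have -> : d = as_map w + as_map d by rewrite -dw /as_map addrA (addrr_pchar2 char2) add0r.
by rewrite (AS_imageD char2) ?mem_AS_image.
Qed.

Lemma ref_frame_elliptic d : d \notin AS_image F ->
  ell_frame (row5 1 0 0 1 d) (ref_frame d) 1 (d ^+ 2).
Proof.
move=> nd; have ani := anisotropic_ref nd.
have hf y : Qpar (y *m ref_frame d) = ell_form 1 (d ^+ 2) y.
  by rewrite ref_frameE /Qpar /ell_form !cd_rowE; ring: two0.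
split=> //.
- by apply: (@row5_neq0 _ _ 0); rewrite cd_rowE oner_neq0.
- exact: (ell_frame_row_free char2 hf).
- by apply: frame_in_hyp => y; rewrite ref_frameE in_hypE /dot !cd_rowE; apply/eqP; ring: two0.
Qed.

Lemma exists_neq0_neq1 : (2 < #|F|)%N -> exists t : F, t != 0 /\ t != 1.
Proof.
move=> h; have /subsetPn [t _] : ~~ ([set: F] \subset [set 0; 1]).
  apply: contraL h => /subset_leq_card; rewrite cardsT cards2 -leqNgt => h2.
  by apply: leq_trans h2 _; case: (_ != _).
by rewrite !inE negb_or => /andP [t0 t1]; exists t.
Qed.

Lemma ref_sections_neq d u : u != 0 ->
  section (row5 1 0 0 1 d) <> section (row5 1 u 1 1 d).
Proof.
move=> un eab; have : row5 0 1 0 0 0 \in section (row5 1 0 0 1 d).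
  rewrite inE in_hypE (@row5_neq0 _ _ 1) ?cd_rowE ?oner_neq0 //= /dot /Qpar !cd_rowE.
  by apply/andP; split; apply/eqP; ring.
rewrite eab inE in_hypE /dot !cd_rowE => /and3P [_ /eqP h _].
by case/eqP: un; rewrite -h; ring.
Qed.

Lemma ref_sections_not_tangent d e : e != 0 ->
  ~ tangent (section (row5 1 0 0 1 d)) (section (row5 1 (e ^+ 2) 1 1 d)).
Proof.
move=> en; set a := row5 1 0 0 1 d; set b := row5 1 (e ^+ 2) 1 1 d.
have mem x : x != 0 -> dot a x = 0 -> dot b x = 0 -> Qpar x = 0 ->
    x \in section a :&: section b.
  by move=> xn ha hb Qx; rewrite !inE !in_hypE xn ha hb Qx eqxx.
apply: (@not_tangent_two_points _ _ _ (row5 e 1 (e ^+ 2) e 0) (row5 d (d / e) (e * d) 0 1)).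
- apply: mem; first by apply: (@row5_neq0 _ _ 1); rewrite cd_rowE oner_neq0.
  + by rewrite /dot !cd_rowE; ring: two0.
  + by rewrite /dot !cd_rowE; ring: two0.
  + by rewrite /Qpar !cd_rowE; ring: two0.
- apply: mem; first by apply: (@row5_neq0 _ _ 4); rewrite cd_rowE oner_neq0.
  + by rewrite /dot !cd_rowE; ring: two0.
  + by rewrite /dot !cd_rowE; field: two0.
  + by rewrite /Qpar !cd_rowE; field: two0.
- by apply: (@row5_neq0 _ _ 1); rewrite cd_rowE oner_neq0.
- move=> k; apply/eqP => /(congr1 (fun x => cd x 4)); rewrite cdZ !cd_rowE mulr0.
  by apply/eqP; exact: oner_neq0.
Qed.

Lemma nonadjacent_ovoids : (2 < #|F|)%N -> exists X Y : {set 'rV[F]_5},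
  [/\ elliptic_ovoid X, elliptic_ovoid Y, X <> Y & ~ tangent X Y].
Proof.
move=> hF; have [d nd] := exists_notin_AS_image char2.
have [t [t0 t1]] := exists_neq0_neq1 hF.
set e := as_map t; set a := row5 1 0 0 1 d; set b := row5 1 (e ^+ 2) 1 1 d.
have en : e != 0.
  rewrite (_ : e = t * (t + 1)); last by rewrite /e /as_map; ring.
  rewrite mulf_eq0 negb_or t0 /=; apply: contra t1 => /eqP h.
  by rewrite -[t]addr0 -h addrA (addrr_pchar2 char2) add0r.
have fa := ref_frame_elliptic nd.
have kab : kappa a b \in AS_image F.
  have -> : kappa a b = e ^+ 2 + 2 * (2 * d + 2 * (e ^+ 2 + 2 * d) ^+ 2).
    by rewrite /kappa /Qpar /dot /pole !cdD !cd_rowE; ring.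
  have -> : e ^+ 2 = as_map (t ^+ 2) by rewrite /e /as_map; ring: two0.
  by rewrite two0 mul0r addr0 mem_AS_image.
have [M' fb] := elliptic_transfer char2 fa (cd0_row5 _ _ _ _ _) (cd0_row5 _ _ _ _ _) kab.
exists (section a), (section b); split.
- by exists a; split=> //; apply/elliptic_sectionP; exists (ref_frame d), 1, (d ^+ 2).
- by exists b; split=> //; apply/elliptic_sectionP; exists M', 1, (d ^+ 2).
- by apply: ref_sections_neq; rewrite expf_eq0 negb_and en orbT.
- exact: ref_sections_not_tangent.
Qed.

End ReferenceOvoids.

Lemma ovoid_dist_le2 (F : finFieldType) (X Y : {set 'rV[F]_5}) : 2 \in [pchar F] ->
  elliptic_ovoid X -> elliptic_ovoid Y -> dist_le (@elliptic_ovoid F) (@tangent F) X Y 2.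
Proof.
move=> char2 [a [/elliptic_sectionP [M [c [d fa]]] ->]].
move=> [b [/elliptic_sectionP [M' [c' [d' fb]]] ->]].
have [fa' a0 <-] := ell_frame_normalize char2 fa.
have [fb' b0 <-] := ell_frame_normalize char2 fb.
move: fa' a0 fb' b0; set a' := _ *: a; set b' := _ *: b => fa' a0 fb' b0.
have [->|ne] := eqVneq a' b'; first by exists [::].
have [a3 [e3 t13 t32]] := common_tangent_section char2 fa' fb' a0 b0 ne.
exists [:: section a3; section b']; split=> //=; do !split=> //; first by exists a3.
by exists b'; split=> //; apply/elliptic_sectionP; exists M', c', d'.
Qed.

Unset Implicit Arguments. Set Strict Implicit.
Local Close Scope ring_scope.

Theorem mainTheorem3 (F : finFieldType) (n : nat) :
  #|F| = (2 ^ n)%N -> (2 < 2 ^ n)%N ->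
  has_diameter (@elliptic_ovoid F) (@tangent F) 2.
Proof.
move=> cardF q_gt2; have char2 := card_finPcharP cardF (isT : prime 2).
split=> [X Y oX oY|]; first exact: ovoid_dist_le2.
have F_gt2 : 2 < #|F| by rewrite cardF.
have [X [Y [oX oY XY nt]]] := nonadjacent_ovoids char2 F_gt2.
by exists X, Y; do 2!split=> //; move=> /(@dist_le1P _ _ _ X Y) [].
Qed.
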